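(* Let $\Omega\subset\mathbb{R}^N$ be open and bounded and let $p:\Omega\to(1,\infty)$ be Lipschitz continuous with $p^-:=\operatorname{ess\,inf}_\Omega p>1$. Let $q\ge2$ and let $u$ be a uniformly continuous viscosity supersolution to $-\Delta^N_{p(x)}u\ge0$ in $\Omega$. Then there is a function $E$ with $E(\varepsilon)\to0$ as $\varepsilon\to0$, depending only on $p$, $q$ and the modulus of continuity of $u$, such that for every $\varepsilon>0$: whenever $x\in\Omega_{r(\varepsilon)}$, $(\eta,X)\in J^{2,-}u_\varepsilon(x)$ and $\eta\ne0$, it holds $$|\eta|^{\min(p(x)-2,0)}F(x,\eta,X)\ge E(\varepsilon).$$
   Context: For $x\in\Omega$, $\eta\ne0$, $X$ symmetric $N\times N$: $F(x,\eta,X):=-\big(\operatorname{tr}X+\frac{p(x)-2}{|\eta|^2}\langle X\eta,\eta\rangle\big)$. The subjet $J^{2,-}v(x)$ is the set of $(\eta,X)$ with $v(y)\ge v(x)+\eta\cdot(y-x)+\frac12\langle X(y-x),y-x\rangle+o(|y-x|^2)$ as $y\to x$. A lower semicontinuous $u$ is a viscosity supersolution to $-\Delta^N_{p(x)}u\ge0$ if $F(x,\eta,X)\ge0$ whenever $x\in\Omega$, $(\eta,X)\in J^{2,-}u(x)$, $\eta\ne0$ (nothing required when $\eta=0$). Inf-convolution: for bounded $u\in C(\Omega)$, $q\ge2$, $\varepsilon>0$, $u_\varepsilon(x):=\inf_{y\in\Omega}\{u(y)+\frac{1}{q\varepsilon^{q-1}}|x-y|^q\}$. Set $r(\varepsilon):=(q\varepsilon^{q-1}\operatorname{osc}_\Omega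 u)^{1/q}$ and $\Omega_{r(\varepsilon)}:=\{x\in\Omega:\operatorname{dist}(x,\partial\Omega)>r(\varepsilon)\}$. *)

From HB Require Import structures.
From mathcomp Require Import all_boot all_order all_algebra.
From mathcomp Require Import all_classical all_reals all_analysis.
Set Implicit Arguments. Unset Strict Implicit. Unset Printing Implicit Defensive.
Import Order.TTheory GRing.Theory Num.Theory.
Local Open Scope classical_set_scope.
Local Open Scope ring_scope.

Section Defs.
Variables (R : realType) (N : nat).

Definition pl_dotv (x y : 'rV[R]_N) : R := \sum_(i < N) x 0 i * y 0 i.
Definition pl_enorm (x : 'rV[R]_N) : R := Num.sqrt (pl_dotv x x).
Definition pl_quadf (X : 'M[R]_N) (v : 'rV[R]_N) : R :=
  \sum_(i < N) \sum_(j < N) X i j * v 0 j * v 0 i.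
Definition pl_symmetric (X : 'M[R]_N) : Prop := X^T = X.

Definition pl_eopen (O : set 'rV[R]_N) : Prop :=
  forall x, O x -> exists r : R, 0 < r /\ forall y, pl_enorm (y - x) < r -> O y.
Definition pl_ebounded (O : set 'rV[R]_N) : Prop :=
  exists M : R, forall x, O x -> pl_enorm x <= M.
Definition pl_eclosure (O : set 'rV[R]_N) : set 'rV[R]_N :=
  [set z | forall e : R, 0 < e -> exists w, O w /\ pl_enorm (z - w) < e].
Definition pl_boundary (O : set 'rV[R]_N) : set 'rV[R]_N :=
  pl_eclosure O `\` O.
Definition pl_dist_to (x : 'rV[R]_N) (A : set 'rV[R]_N) : R :=
  inf [set pl_enorm (x - z) | z in A].
Definition pl_inner_set (O : set 'rV[R]_N) (r : R) : set 'rV[R]_N :=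
  [set x | O x /\ r < pl_dist_to x (pl_boundary O)].

Definition pl_lipschitz_on (O : set 'rV[R]_N) (f : 'rV[R]_N -> R) : Prop :=
  exists L : R, forall x y, O x -> O y -> `|f x - f y| <= L * pl_enorm (x - y).

Definition pl_modulus (w : R -> R) : Prop :=
  (forall t, 0 <= t -> 0 <= w t) /\
  (forall s t, 0 <= s -> s <= t -> w s <= w t) /\
  (w t @[t --> 0^'+] --> 0).
Definition pl_has_modulus (O : set 'rV[R]_N) (u : 'rV[R]_N -> R) (w : R -> R) : Prop :=
  forall x y, O x -> O y -> `|u x - u y| <= w (pl_enorm (x - y)).

Definition pl_Fop (p : 'rV[R]_N -> R) (x eta : 'rV[R]_N) (X : 'M[R]_N) : R :=
  - (\tr X + (p x - 2) / (pl_enorm eta ^+ 2) * pl_quadf X eta).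

Definition pl_subjet (O : set 'rV[R]_N) (v : 'rV[R]_N -> R) (x eta : 'rV[R]_N)
    (X : 'M[R]_N) : Prop :=
  pl_symmetric X /\
  forall d : R, 0 < d -> exists rho : R, 0 < rho /\
    forall y, O y -> pl_enorm (y - x) < rho ->
      v x + pl_dotv eta (y - x) + 2^-1 * pl_quadf X (y - x) - d * pl_enorm (y - x) ^+ 2
        <= v y.

Definition pl_lsc_on (O : set 'rV[R]_N) (u : 'rV[R]_N -> R) : Prop :=
  forall x, O x -> forall e : R, 0 < e -> exists rho : R, 0 < rho /\
    forall y, O y -> pl_enorm (y - x) < rho -> u x - e < u y.

Definition pl_visc_super (O : set 'rV[R]_N) (p u : 'rV[R]_N -> R) : Prop :=
  pl_lsc_on O u /\
  forall x eta X, O x -> pl_subjet O u x eta X -> eta != 0 -> 0 <= pl_Fop p x eta X.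

Definition pl_osc (O : set 'rV[R]_N) (u : 'rV[R]_N -> R) : R :=
  sup [set u y - u z | y in O & z in O].

Definition pl_infconv (O : set 'rV[R]_N) (u : 'rV[R]_N -> R) (q eps : R)
    (x : 'rV[R]_N) : R :=
  inf [set u y + (pl_enorm (x - y)) `^ q / (q * eps `^ (q - 1)) | y in O].

Definition pl_rad (O : set 'rV[R]_N) (u : 'rV[R]_N -> R) (q eps : R) : R :=
  (q * eps `^ (q - 1) * pl_osc O u) `^ (q^-1).

End Defs.

(* Let y be a point where the infimum defining u_eps(x) is attained.  It exists since
   u is continuous and, by the choice of r(eps), points farther than r(eps) from x do
   worse than x itself, so the minimisation takes place on a compact ball inside Omega.
   Touching u_eps from below at x by (eta, X) yields a test function for u at y:
   the first-order condition forces eta = |x-y|^(q-2) (x-y) / eps^(q-1), so x <> y,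
   and a second-order Taylor bound for |.|^q shows that eta, together with X plus a
   rank-two correction along eta, lies in J^{2,-}u(y).  The correction is tuned so that
   the supersolution inequality at y becomes F(x, eta, X) >= - C |x-y|^q / (q eps^(q-1)),
   where C depends only on q, the Lipschitz constant of p and p^-.  Finally
   |x-y|^q / (q eps^(q-1)) <= omega(|x-y|) <= omega(diam Omega), which bounds |x-y| by a
   quantity tending to 0 with eps, and the weight |eta|^min(p(x)-2, 0) is absorbed using
   |eta| |x-y| / q = |x-y|^q / (q eps^(q-1)). *)

From mathcomp Require Import all_boot all_order all_algebra.
From mathcomp Require Import all_classical all_reals all_analysis.
From mathcomp Require Import ring lra.
Import Order.TTheory GRing.Theory Num.Theory numFieldNormedType.Exports.
Local Open Scope classical_set_scope.
Local Open Scope ring_scope.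
Set Implicit Arguments. Unset Strict Implicit. Unset Printing Implicit Defensive.

Section Euclid.
Variables (R : realType) (N : nat).
Implicit Types (u v w : 'rV[R]_N).

Lemma dotvC u v : pl_dotv u v = pl_dotv v u.
Proof. by apply: eq_bigr => i _; rewrite mulrC. Qed.

Lemma dotvDl u v w : pl_dotv (u + v) w = pl_dotv u w + pl_dotv v w.
Proof. by rewrite /pl_dotv -big_split; apply: eq_bigr => i _; rewrite !mxE mulrDl. Qed.

Lemma dotvZl a u w : pl_dotv (a *: u) w = a * pl_dotv u w.
Proof. by rewrite /pl_dotv mulr_sumr; apply: eq_bigr => i _; rewrite !mxE mulrA. Qed.

Lemma dotvNl u w : pl_dotv (- u) w = - pl_dotv u w.
Proof. by rewrite -scaleN1r dotvZl mulN1r. Qed.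

Lemma dotvDr u v w : pl_dotv w (u + v) = pl_dotv w u + pl_dotv w v.
Proof. by rewrite dotvC dotvDl !(dotvC w). Qed.

Lemma dotvZr a u w : pl_dotv w (a *: u) = a * pl_dotv w u.
Proof. by rewrite dotvC dotvZl dotvC. Qed.

Lemma dotvNr u w : pl_dotv w (- u) = - pl_dotv w u.
Proof. by rewrite dotvC dotvNl dotvC. Qed.

Lemma dotvv_ge0 v : 0 <= pl_dotv v v.
Proof. by apply: sumr_ge0 => i _; rewrite -expr2 sqr_ge0. Qed.

Lemma dotvv_eq0 v : (pl_dotv v v == 0) = (v == 0).
Proof.
apply/idP/eqP => [|->]; last by rewrite /pl_dotv big1 // => i _; rewrite mxE mul0r.
rewrite psumr_eq0 => [/allP v0|i _]; last by rewrite -expr2 sqr_ge0.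
apply/rowP => i; rewrite mxE.
by have := v0 i (mem_index_enum i); rewrite /= -expr2 sqrf_eq0 => /eqP.
Qed.

Lemma dotvv_gt0 v : v != 0 -> 0 < pl_dotv v v.
Proof. by move=> v0; rewrite lt_def dotvv_eq0 v0 dotvv_ge0. Qed.

Lemma enorm_ge0 v : 0 <= pl_enorm v.
Proof. exact: sqrtr_ge0. Qed.

Lemma enorm_sqr v : pl_enorm v ^+ 2 = pl_dotv v v.
Proof. by rewrite sqr_sqrtr // dotvv_ge0. Qed.

Lemma enorm_gt0 v : v != 0 -> 0 < pl_enorm v.
Proof. by move=> v0; rewrite sqrtr_gt0 dotvv_gt0. Qed.

Lemma enorm0 : pl_enorm (0 : 'rV[R]_N) = 0.
Proof. by apply/eqP; rewrite sqrtr_eq0 le_eqVlt dotvv_eq0 eqxx. Qed.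

Lemma dotv_sqr_le u v : pl_dotv u v ^+ 2 <= pl_dotv u u * pl_dotv v v.
Proof.
have [->|v0] := eqVneq v 0.
  by rewrite (dotvC u) -(scale0r 0) !dotvZl !mul0r expr0n mulr0.
have vv := dotvv_gt0 v0.
set t := pl_dotv u v / pl_dotv v v.
have := dotvv_ge0 (u - t *: v).
rewrite !(dotvDl, dotvDr, dotvNl, dotvNr, dotvZl, dotvZr) (dotvC v u).
have -> : pl_dotv u u - t * pl_dotv u v + (- (t * pl_dotv u v) - t * - (t * pl_dotv v v))
    = pl_dotv u u - pl_dotv u v ^+ 2 / pl_dotv v v by rewrite /t; field; rewrite gt_eqF.
by rewrite subr_ge0 ler_pdivrMr.
Qed.

Lemma normr_dotv_le u v : `|pl_dotv u v| <= pl_enorm u * pl_enorm v.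
Proof.
rewrite -(ler_pXn2r (n := 2)) ?nnegrE ?mulr_ge0 ?enorm_ge0 //.
by rewrite real_normK ?num_real // exprMn !enorm_sqr dotv_sqr_le.
Qed.

Lemma dotv_le u v : pl_dotv u v <= pl_enorm u * pl_enorm v.
Proof. exact: le_trans (ler_norm _) (normr_dotv_le u v). Qed.

Lemma ler_enormD u v : pl_enorm (u + v) <= pl_enorm u + pl_enorm v.
Proof.
rewrite -(ler_pXn2r (n := 2)) ?nnegrE ?addr_ge0 ?enorm_ge0 //.
rewrite enorm_sqr !(dotvDl, dotvDr) sqrrD !enorm_sqr (dotvC v u).
have := dotv_le u v; lra.
Qed.

Lemma enormZ a v : pl_enorm (a *: v) = `|a| * pl_enorm v.
Proof. by rewrite /pl_enorm dotvZl dotvZr mulrA -expr2 sqrtrM ?sqr_ge0 // sqrtr_sqr. Qed.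

Lemma enorm_sqrZ a v : pl_enorm (a *: v) ^+ 2 = a ^+ 2 * pl_dotv v v.
Proof. by rewrite enormZ exprMn real_normK ?num_real // enorm_sqr. Qed.

Lemma enormN v : pl_enorm (- v) = pl_enorm v.
Proof. by rewrite -scaleN1r enormZ normrN normr1 mul1r. Qed.

Lemma enorm_distC u v : pl_enorm (u - v) = pl_enorm (v - u).
Proof. by rewrite -enormN opprB. Qed.

Lemma ler_enorm_dist u v : `|pl_enorm u - pl_enorm v| <= pl_enorm (u - v).
Proof.
have := ler_enormD (u - v) v; have := ler_enormD (v - u) u.
rewrite !subrK enorm_distC ler_norml; lra.
Qed.

Lemma ler_mxnorm_enorm v : `|v| <= pl_enorm v.
Proof.
rewrite [leLHS]/Num.norm /= mx_normrE; apply/bigmax_leP; split; first exact: enorm_ge0.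
move=> [i j] _ /=; rewrite (ord1 i) -(ler_pXn2r (n := 2)) ?nnegrE ?enorm_ge0 //.
rewrite real_normK ?num_real // enorm_sqr /pl_dotv (bigD1 j) //= -expr2 lerDl.
by apply: sumr_ge0 => k _; rewrite -expr2 sqr_ge0.
Qed.

Lemma ler_coord_mxnorm v i : `|v 0 i| <= `|v|.
Proof. by rewrite [leRHS]/Num.norm /= mx_normrE; apply/bigmax_geP; right; exists (0, i). Qed.

Lemma ler_enorm_mxnorm v : pl_enorm v <= N%:R * `|v|.
Proof.
apply: (@le_trans _ _ (\sum_i `|v 0 i|)).
  rewrite -(ler_pXn2r (n := 2)) ?nnegrE ?enorm_ge0 ?sumr_ge0 //.
  rewrite enorm_sqr /pl_dotv expr2 mulr_suml; apply: ler_sum => i _.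
  rewrite (bigD1 i) //= mulrDr -normrM ler_wpDr ?ler_norm //.
  by rewrite mulr_ge0 ?sumr_ge0.
have -> : N%:R * `|v| = \sum_(i < N) `|v| by rewrite sumr_const card_ord mulr_natl.
by apply: ler_sum => i _; exact: ler_coord_mxnorm.
Qed.

Lemma dotvv_eq0_small v (C d : R) : 0 < d ->
  (forall t, 0 < t -> t < d -> t * pl_dotv v v <= C * t ^+ 2 * pl_dotv v v) -> v = 0.
Proof.
move=> d0 small; apply/eqP; apply: contraT => v0.
have vv := dotvv_gt0 v0.
have C1 : 0 < `|C| + 1 by rewrite ltr_wpDl.
set t := Num.min (d / 2) (2^-1 / (`|C| + 1)).
have t0 : 0 < t by rewrite lt_min !divr_gt0.
have td : t < d by rewrite gt_min ltr_pdivrMr ?ltr_pMr ?ltr1n.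
have tC : t * (`|C| + 1) <= 2^-1 by rewrite -ler_pdivlMr // ge_min lexx orbT.
have : t * pl_dotv v v <= `|C| * t * (t * pl_dotv v v).
  apply: le_trans (small t t0 td) _.
  have -> : `|C| * t * (t * pl_dotv v v) = `|C| * t ^+ 2 * pl_dotv v v by ring.
  by rewrite ler_wpM2r ?dotvv_ge0 // ler_wpM2r ?sqr_ge0 ?ler_norm.
rewrite -[X in X <= _]mul1r ler_pM2r ?mulr_gt0 //.
move: tC; rewrite mulrDr mulr1 mulrC; have := ltW t0; lra.
Qed.

Lemma enormZ_lt v (t c : R) : 0 < t -> t < c / (pl_enorm v + 1) -> pl_enorm (t *: v) < c.
Proof.
move=> t0; have v1 : 0 < pl_enorm v + 1 by rewrite ltr_wpDl ?enorm_ge0.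
rewrite enormZ (ger0_norm (ltW t0)) ltr_pdivlMr // => /(le_lt_trans _); apply.
by rewrite ler_pM2l //; lra.
Qed.

Lemma enorm_projZ_le (b : R) (eta k : 'rV[R]_N) :
  pl_enorm ((b * pl_dotv eta k / pl_dotv eta eta) *: eta) <= `|b| * pl_enorm k.
Proof.
have [->|eta0] := eqVneq eta 0; first by rewrite scaler0 enorm0 mulr_ge0 ?enorm_ge0.
have n0 := enorm_gt0 eta0.
rewrite enormZ -enorm_sqr !normrM normfV (ger0_norm (sqr_ge0 _)) -!mulrA ler_wpM2l //.
have -> : pl_enorm eta ^- 2 * pl_enorm eta = (pl_enorm eta)^-1 by field; rewrite gt_eqF.
by rewrite ler_pdivrMr // mulrC normr_dotv_le.
Qed.

End Euclid.

Section QuadraticForms.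
Variables (R : realType) (N : nat).
Implicit Types (u v k e : 'rV[R]_N) (X : 'M[R]_N).

Definition mulmxv X e : 'rV[R]_N := \row_i \sum_j X i j * e 0 j.
Definition mx_abs_sum X : R := \sum_i \sum_j `|X i j|.

Lemma normr_quadf_le X v : `|pl_quadf X v| <= mx_abs_sum X * pl_enorm v ^+ 2.
Proof.
have coord_le i : `|v 0 i| <= pl_enorm v.
  exact: le_trans (ler_coord_mxnorm v i) (ler_mxnorm_enorm v).
rewrite /pl_quadf /mx_abs_sum mulr_suml.
apply: le_trans (ler_norm_sum _ _ _) _; apply: ler_sum => i _.
rewrite mulr_suml; apply: le_trans (ler_norm_sum _ _ _) _; apply: ler_sum => j _.
by rewrite !normrM -mulrA ler_wpM2l // expr2 ler_pM.
Qed.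

Lemma quadfZ X t e : pl_quadf X (t *: e) = t ^+ 2 * pl_quadf X e.
Proof.
rewrite /pl_quadf mulr_sumr; apply: eq_bigr => i _; rewrite mulr_sumr.
by apply: eq_bigr => j _; rewrite !mxE; ring.
Qed.

Lemma quadfZ_ge X t v : - (mx_abs_sum X * (t ^+ 2 * pl_dotv v v)) <= pl_quadf X (t *: v).
Proof.
have := normr_quadf_le X v; rewrite quadfZ ler_norml enorm_sqr => /andP[lb _].
by rewrite mulrCA -mulrN ler_wpM2l ?sqr_ge0.
Qed.

Lemma dotv_mulmxv X e : pl_dotv e (mulmxv X e) = pl_quadf X e.
Proof.
rewrite /pl_dotv /pl_quadf; apply: eq_bigr => i _; rewrite mxE mulr_sumr.
by apply: eq_bigr => j _; ring.
Qed.

Lemma mulmxvZ X t e : mulmxv X (t *: e) = t *: mulmxv X e.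
Proof.
by apply/rowP => i; rewrite !mxE mulr_sumr; apply: eq_bigr => j _; rewrite !mxE; ring.
Qed.

Lemma quadfD X a b : pl_symmetric X ->
  pl_quadf X (a + b) = pl_quadf X a + 2 * pl_dotv (mulmxv X b) a + pl_quadf X b.
Proof.
move=> sX; have XC i j : X j i = X i j by rewrite -{1}sX mxE.
have cross1 : \sum_i \sum_j X i j * b 0 j * a 0 i = pl_dotv (mulmxv X b) a.
  by apply: eq_bigr => i _; rewrite mxE mulr_suml.
have cross2 : \sum_i \sum_j X i j * a 0 j * b 0 i = pl_dotv (mulmxv X b) a.
  rewrite exchange_big; apply: eq_bigr => j _; rewrite mxE mulr_suml.
  by apply: eq_bigr => i _; rewrite -XC; ring.
rewrite mulr2n mulrDl mul1r -{1}cross1 -cross2 /pl_quadf addrA -!big_split /=.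
by apply: eq_bigr => i _; rewrite -!big_split /=; apply: eq_bigr => j _; rewrite !mxE; ring.
Qed.

Lemma quadfDZ X k e t : pl_symmetric X ->
  pl_quadf X (k + t *: e) =
  pl_quadf X k + 2 * t * pl_dotv (mulmxv X e) k + t ^+ 2 * pl_quadf X e.
Proof. by move=> sX; rewrite quadfD // mulmxvZ dotvZl quadfZ mulrA. Qed.

Definition rank2_update X e (b g : R) : 'M[R]_N :=
  \matrix_(i, j) (X i j + b * (e 0 i * mulmxv X e 0 j + mulmxv X e 0 i * e 0 j)
                   + g * (e 0 i * e 0 j)).

Lemma rank2_update_sym X e b g : pl_symmetric X -> pl_symmetric (rank2_update X e b g).
Proof. by move=> sX; apply/matrixP => i j; rewrite !mxE -{1}sX mxE; ring. Qed.

Lemma quadf_rank2_update X e b g k :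
  pl_quadf (rank2_update X e b g) k = pl_quadf X k
    + 2 * b * (pl_dotv e k * pl_dotv (mulmxv X e) k) + g * pl_dotv e k ^+ 2.
Proof.
set Xe := mulmxv X e.
have sum1 : \sum_i \sum_j (b * (e 0 i * Xe 0 j)) * k 0 j * k 0 i
    = b * (pl_dotv e k * pl_dotv Xe k).
  rewrite /pl_dotv mulr_suml mulr_sumr; apply: eq_bigr => i _.
  by rewrite !mulr_sumr; apply: eq_bigr => j _; ring.
have sum2 : \sum_i \sum_j (b * (Xe 0 i * e 0 j)) * k 0 j * k 0 i
    = b * (pl_dotv e k * pl_dotv Xe k).
  rewrite /pl_dotv mulr_suml mulr_sumr exchange_big; apply: eq_bigr => i _.
  by rewrite !mulr_sumr; apply: eq_bigr => j _; ring.
have sum3 : \sum_i \sum_j (g * (e 0 i * e 0 j)) * k 0 j * k 0 i = g * pl_dotv e k ^+ 2.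
  rewrite /pl_dotv expr2 mulr_suml mulr_sumr; apply: eq_bigr => i _.
  by rewrite !mulr_sumr; apply: eq_bigr => j _; ring.
rewrite -mulrA mulr2n mulrDl mul1r -{2}sum1 -sum2 -sum3 /pl_quadf -!big_split /=.
by apply: eq_bigr => i _; rewrite -!big_split /=; apply: eq_bigr => j _; rewrite !mxE; ring.
Qed.

Lemma tr_rank2_update X e b g :
  \tr (rank2_update X e b g) = \tr X + 2 * b * pl_quadf X e + g * pl_dotv e e.
Proof.
rewrite -dotv_mulmxv /mxtrace /pl_dotv !mulr_sumr -!big_split /=.
by apply: eq_bigr => i _; rewrite !mxE; ring.
Qed.

Definition direction_update X eta (b c : R) : 'M[R]_N :=
  let n2 := pl_dotv eta eta in
  rank2_update X eta (b / n2) (b ^+ 2 * (pl_quadf X eta - 2 * c * n2) / n2 ^+ 2).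

Lemma Fop_direction_update (p : 'rV[R]_N -> R) x y eta X b c : eta != 0 ->
  pl_Fop p y eta (direction_update X eta b c) =
  pl_Fop p x eta X + 2 * (p y - 1) * c * b ^+ 2
  - pl_quadf X eta / pl_dotv eta eta * ((p y - 1) * (1 + b) ^+ 2 - (p x - 1)).
Proof.
move=> /dotvv_gt0 /gt_eqF n0.
rewrite /pl_Fop /direction_update /= tr_rank2_update quadf_rank2_update enorm_sqr.
rewrite (dotvC (mulmxv X eta)) dotv_mulmxv.
by field; rewrite n0.
Qed.

Lemma quadf_direction_update X eta b c k : pl_symmetric X -> eta != 0 ->
  let t := b * pl_dotv eta k / pl_dotv eta eta in
  pl_quadf (direction_update X eta b c) k =
  pl_quadf X (k + t *: eta) - 2 * c * pl_enorm (t *: eta) ^+ 2.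
Proof.
move=> sX /dotvv_gt0 /gt_eqF n0 t.
rewrite /direction_update /= quadf_rank2_update quadfDZ // enorm_sqrZ /t.
by field; rewrite n0.
Qed.

End QuadraticForms.

Section RealInequalities.
Variable R : realType.
Implicit Types a m n q r t u y : R.

Lemma expR_le_quad y : y <= 2^-1 -> expR y <= 1 + y + 2 * y ^+ 2.
Proof.
move=> y2; have y1 : 0 < 1 - y by lra.
have : expR y <= (1 - y)^-1.
  have := ler_wpM2r (expR_ge0 y) (expR_ge1Dx (- y)).
  rewrite expRN mulVf ?gt_eqF ?expR_gt0 // => le1.
  by rewrite -[leRHS]mul1r ler_pdivlMr // mulrC.
move=> /le_trans; apply; rewrite -[leLHS]mul1r ler_pdivrMr // -subr_ge0.
have -> : (1 + y + 2 * y ^+ 2) * (1 - y) - 1 = y ^+ 2 * (1 - 2 * y) by ring.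
by rewrite mulr_ge0 ?sqr_ge0 //; lra.
Qed.

Lemma ln1D_le u : -1 < u -> ln (1 + u) <= u.
Proof. by move=> u1; rewrite -ler_expR lnK ?expR_ge1Dx // posrE; lra. Qed.

Lemma powR1D_le_quad m u : 1 <= m -> `|m * u| <= 2^-1 ->
  (1 + u) `^ m <= 1 + m * u + 2 * m ^+ 2 * u ^+ 2.
Proof.
move=> m1 mu2.
have u1 : -1 < u.
  have : `|u| <= 2^-1 by apply: le_trans mu2; rewrite normrM ler_peMl // ger0_norm //; lra.
  by rewrite ler_norml; lra.
rewrite /powR ifN; last by apply/eqP; lra.
have : expR (m * ln (1 + u)) <= expR (m * u).
  by rewrite ler_expR ler_wpM2l ?ln1D_le //; lra.
move=> /le_trans; apply.
have : m * u <= 2^-1 by move: mu2; rewrite ler_norml; lra.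
by move/expR_le_quad => /le_trans; apply; rewrite exprMn mulrA.
Qed.

Lemma powR2 a : 0 <= a -> a `^ 2 = a ^+ 2.
Proof. by move=> a0; rewrite -powR_mulrn. Qed.

Lemma powR_le_sqr q a : 2 <= q -> 0 <= a -> a <= 1 -> a `^ q <= a ^+ 2.
Proof.
move=> q2 a0 a1; have [->|an0] := eqVneq a 0.
  by rewrite powR0 ?expr0n //; apply/eqP; lra.
by rewrite -powR2 // ger_powR // lt_neqAle eq_sym an0 a0.
Qed.

Lemma powR_subn2 r q : 0 < r -> r `^ q = r `^ (q - 2) * r ^+ 2.
Proof.
move=> r0; rewrite -(powR2 (ltW r0)) -powRD; last by apply/implyP => _; rewrite gt_eqF.
by rewrite subrK.
Qed.

Lemma sqr_sqrtr_sub1_le a : 0 <= a -> (Num.sqrt a - 1) ^+ 2 <= (a - 1) ^+ 2.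
Proof.
move=> a0; have s0 := sqrtr_ge0 a.
have -> : a - 1 = (Num.sqrt a - 1) * (Num.sqrt a + 1).
  by rewrite mulrDr mulr1 mulrBl -expr2 sqr_sqrtr //; ring.
rewrite exprMn -[leLHS]mulr1 ler_wpM2l ?sqr_ge0 // expr_ge1 //; lra.
Qed.

(* With [n = q r^(q-1)/K] and [A = r^q/K], [n^m A] is at most [A] if [n >= 1]
   and at most [n^-1 A = r/q] otherwise. *)
Lemma powR_npos_mul_le n m A B r q : 0 < n -> -1 <= m <= 0 -> 0 < q ->
  0 <= A <= B -> 0 <= r -> A = n * r / q -> n `^ m * A <= B + r / q.
Proof.
move=> n0 /andP[m1 m0] q0 /andP[A0 AB] r0 An.
have rq0 : 0 <= r / q by rewrite divr_ge0 // ltW.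
have [n1|n1] := leP 1 n.
  have : n `^ m <= 1 by have := ler_powR n1 m0; rewrite powRr0.
  move=> nm1; apply: (@le_trans _ _ A); last by lra.
  by rewrite -[leRHS]mul1r ler_wpM2r.
have : n `^ m <= n `^ (-1) by apply: ger_powR => //; rewrite n0 ltW.
rewrite (powR_inv1 (ltW n0)) => /(ler_wpM2r A0) /le_trans; apply.
by rewrite An mulrA mulKf ?gt_eqF //; lra.
Qed.

Lemma sqrt_ratio_sub1_le (a b m : R) : 1 < m <= b -> 1 < a ->
  (b - 1) * (Num.sqrt ((a - 1) / (b - 1)) - 1) ^+ 2 <= (a - b) ^+ 2 / (m - 1).
Proof.
move=> /andP[m1 mb] a1; have b1 : 0 < b - 1 by lra.
have ratio0 : 0 <= (a - 1) / (b - 1) by rewrite divr_ge0 //; lra.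
apply: le_trans (ler_wpM2l (ltW b1) (sqr_sqrtr_sub1_le ratio0)) _.
have -> : (b - 1) * ((a - 1) / (b - 1) - 1) ^+ 2 = (a - b) ^+ 2 / (b - 1).
  by field; rewrite gt_eqF.
by rewrite ler_wpM2l ?sqr_ge0 // lef_pV2 ?posrE; lra.
Qed.

End RealInequalities.

Section TaylorBound.
Variables (R : realType) (N : nat).

Lemma powR_sqr_half (a q : R) : 0 <= a -> (a ^+ 2) `^ (q / 2) = a `^ q.
Proof. by move=> a0; rewrite -powR2 // -powRrM mulrC divfK ?pnatr_eq0. Qed.

Lemma powR_sqr_addr_le (q r w : R) : 2 <= q -> 0 < r -> `|w| <= r ^+ 2 / q ->
  (r ^+ 2 + w) `^ (q / 2) <=
  r `^ q + q / 2 * r `^ (q - 2) * w + 2 * (q / 2) ^+ 2 * r `^ (q - 2) * (w / r) ^+ 2.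
Proof.
move=> q2 r0 wr; have q0 : 0 < q by lra.
have r2 : 0 < r ^+ 2 by rewrite exprn_gt0.
set u := w / r ^+ 2.
have wu : r ^+ 2 + w = r ^+ 2 * (1 + u) by rewrite /u mulrDr mulr1 mulrC divfK ?gt_eqF.
have m1 : 1 <= q / 2 by rewrite ler_pdivlMr //; lra.
have u_le : `|u| <= q^-1.
  rewrite /u normrM normfV (ger0_norm (ltW r2)) ler_pdivrMr //.
  by apply: le_trans wr _; rewrite le_eqVlt; apply/predU1l; rewrite mulrC.
have mu : `|q / 2 * u| <= 2^-1.
  have q2_0 : 0 <= q / 2 by rewrite divr_ge0 // ltW.
  rewrite normrM ger0_norm //; apply: le_trans (ler_wpM2l q2_0 u_le) _.
  by rewrite le_eqVlt; apply/predU1l; field; rewrite gt_eqF.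
have u1 : 0 <= 1 + u.
  have : q^-1 <= 2^-1 by rewrite lef_pV2 ?posrE //.
  by move: u_le; rewrite ler_norml; lra.
rewrite wu (powRM _ (ltW r2) u1) powR_sqr_half; last exact: ltW.
apply: le_trans (ler_wpM2l (powR_ge0 _ _) (powR1D_le_quad m1 mu)) _.
rewrite (powR_subn2 q r0) /u; rewrite le_eqVlt; apply/predU1l; field; rewrite gt_eqF //.
Qed.

Definition taylor_const (q : R) := q / 2 + 18 * (q / 2) ^+ 2.

Lemma taylor_const_ge0 (q : R) : 0 <= q -> 0 <= taylor_const q.
Proof. by move=> q0; rewrite addr_ge0 ?mulr_ge0 ?divr_ge0 ?sqr_ge0. Qed.

Lemma powR_enormD_le (q : R) (z j : 'rV[R]_N) : 2 <= q -> z != 0 ->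
  pl_enorm j <= pl_enorm z / (3 * q) ->
  pl_enorm (z + j) `^ q <= pl_enorm z `^ q + q * pl_enorm z `^ (q - 2) * pl_dotv z j
     + taylor_const q * pl_enorm z `^ (q - 2) * pl_enorm j ^+ 2.
Proof.
move=> q2 z0 jz; have q0 : 0 < q by lra.
set r := pl_enorm z; set e := pl_enorm j; set P := r `^ (q - 2).
have r0 : 0 < r by exact: enorm_gt0.
have e0 : 0 <= e by exact: enorm_ge0.
have er : e <= r.
  apply: le_trans jz _; rewrite -/r ler_pdivrMr ?mulr_gt0 // ler_peMr; lra.
set w := 2 * pl_dotv z j + e ^+ 2.
have sqr_zj : pl_enorm (z + j) ^+ 2 = r ^+ 2 + w.
  by rewrite /w /e /r !enorm_sqr !(dotvDl, dotvDr) (dotvC j z); ring.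
have w3 : `|w| <= 3 * r * e.
  have := normr_dotv_le z j; rewrite -/r -/e => zj.
  rewrite /w; apply: le_trans (ler_normD _ _) _.
  rewrite normrM normr_nat (ger0_norm (sqr_ge0 e)).
  have : e ^+ 2 <= r * e by rewrite expr2 ler_wpM2r.
  lra.
have wr : `|w| <= r ^+ 2 / q.
  apply: le_trans w3 _; apply: le_trans (_ : 3 * r * (r / (3 * q)) <= _).
    by rewrite ler_wpM2l ?mulr_ge0 // ltW.
  by rewrite le_eqVlt; apply/predU1l; field; lra.
have w9 : (w / r) ^+ 2 <= 9 * e ^+ 2.
  rewrite exprMn exprVn ler_pdivrMr ?exprn_gt0 // -real_normK ?num_real //.
  have -> : 9 * e ^+ 2 * r ^+ 2 = (3 * r * e) ^+ 2 by ring.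
  by rewrite ler_pXn2r ?nnegrE ?mulr_ge0 // ltW.
have P0 : 0 <= P by exact: powR_ge0.
rewrite -powR_sqr_half ?enorm_ge0 // sqr_zj.
apply: le_trans (powR_sqr_addr_le q2 r0 wr) _.
have : 2 * (q / 2) ^+ 2 * P * (w / r) ^+ 2 <= 18 * (q / 2) ^+ 2 * P * e ^+ 2.
  have -> : 18 * (q / 2) ^+ 2 * P * e ^+ 2 = 2 * (q / 2) ^+ 2 * P * (9 * e ^+ 2) by ring.
  by apply: ler_wpM2l w9; rewrite mulr_ge0 // mulr_ge0 // sqr_ge0.
have -> : q / 2 * P * w = q * P * pl_dotv z j + q / 2 * P * e ^+ 2 by rewrite /w; field.
rewrite -/P /taylor_const; lra.
Qed.

End TaylorBound.

Section SegmentToBoundary.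
Variables (R : realType) (N : nat) (O : set 'rV[R]_N) (x y : 'rV[R]_N).
Hypotheses (oO : pl_eopen O) (Ox : O x) (nOy : ~ O y).

Let seg (s : R) := x + s *: (y - x).
Let S := [set t : R | 0 <= t <= 1 /\ forall s, 0 <= s <= t -> O (seg s)].
Let T := sup S.

Lemma seg_dist (a b : R) : pl_enorm (seg a - seg b) = `|a - b| * pl_enorm (y - x).
Proof. by rewrite /seg opprD addrACA subrr add0r -scalerBl enormZ. Qed.

Let S0 : S 0.
Proof.
split=> [|s /andP[s0 s0']]; first by rewrite lexx ler01.
have -> : s = 0 by apply/eqP; rewrite eq_le s0 s0'.
by rewrite /seg scale0r addr0.
Qed.

Let S_has_sup : has_sup S.
Proof. by split; [exists 0 | exists 1 => t [/andP[_]]]. Qed.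

Let T_ge0 : 0 <= T. Proof. by apply: sup_upper_bound; [exact: S_has_sup | exact: S0]. Qed.

Let T_le1 : T <= 1. Proof. by apply: ge_sup; [exists 0 | move=> t [/andP[_]]]. Qed.

Let seg_before_sup s : 0 <= s < T -> O (seg s).
Proof.
move=> /andP[s0 sT].
have [t [_ St] st] : exists2 t, S t & T - (T - s) < t.
  by apply: sup_adherent; rewrite ?subr_gt0.
by rewrite opprB addrC subrK in st; apply: St; rewrite s0 ltW.
Qed.

(* Openness at [seg T] would let [S] grow beyond its supremum. *)
Let seg_sup_notin : ~ O (seg T).
Proof.
move=> OT; have [r [r0 ball_T]] := oO OT.
have [T1|Tlt1] := eqVneq T 1.
  by apply: nOy; move: OT; rewrite /seg T1 scale1r addrC subrK.
have dpos : 0 < pl_enorm (y - x) + 1 by rewrite ltr_wpDl ?enorm_ge0.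
set h := r / (pl_enorm (y - x) + 1).
have h0 : 0 < h by rewrite divr_gt0.
set T' := Num.min 1 (T + h).
have TT' : T < T' by rewrite lt_min lt_neqAle Tlt1 T_le1 /=; lra.
have ST' : S T'.
  split; first by rewrite (le_trans T_ge0 (ltW TT')) /= ge_min lexx.
  move=> s /andP[s0 sT']; have [sT|Ts] := ltP s T; first by apply: seg_before_sup; rewrite s0.
  apply: ball_T; rewrite seg_dist ger0_norm ?subr_ge0 //.
  have sh : s - T <= h by move: sT'; rewrite le_min => /andP[_]; lra.
  apply: le_lt_trans (ler_wpM2r (enorm_ge0 _) sh) _.
  by rewrite mulrAC ltr_pdivrMr // ltr_pM2l //; lra.
by have := sup_upper_bound S_has_sup ST'; rewrite -/T; lra.
Qed.

Let seg_sup_closure : pl_eclosure O (seg T).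
Proof.
move=> e e0.
have T0 : 0 < T.
  rewrite lt_def T_ge0 andbT; apply/eqP => T0.
  by apply: seg_sup_notin; rewrite T0 /seg scale0r addr0.
have dpos : 0 < pl_enorm (y - x) + 1 by rewrite ltr_wpDl ?enorm_ge0.
set h := e / (pl_enorm (y - x) + 1).
have h0 : 0 < h by rewrite divr_gt0.
set s := Num.max 0 (T - h).
have s0 : 0 <= s by rewrite le_max lexx.
have sT : s < T by rewrite gt_max T0 /=; lra.
exists (seg s); split; first by apply: seg_before_sup; rewrite s0.
rewrite seg_dist ger0_norm; last by rewrite subr_ge0 ltW.
have Ts : T - s <= h.
  have : T - h <= s by rewrite le_max lexx orbT.
  lra.
apply: le_lt_trans (ler_wpM2r (enorm_ge0 _) Ts) _.
by rewrite mulrAC ltr_pdivrMr // ltr_pM2l //; lra.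
Qed.

Lemma segment_meets_boundary :
  exists2 s : R, 0 <= s <= 1 & pl_boundary O (x + s *: (y - x)).
Proof.
by exists T; [rewrite T_ge0 T_le1 | split; [exact: seg_sup_closure | exact: seg_sup_notin]].
Qed.

End SegmentToBoundary.

Section Topology.
Variables (R : realType) (N : nat).

Lemma dist_to_le (O : set 'rV[R]_N) x z : pl_boundary O z ->
  pl_dist_to x (pl_boundary O) <= pl_enorm (x - z).
Proof.
move=> bz; apply: ge_inf; last by exists z.
by exists 0 => _ [? _ <-]; exact: enorm_ge0.
Qed.

Lemma eball_sub (O : set 'rV[R]_N) x (rho : R) : pl_eopen O -> O x ->
  rho < pl_dist_to x (pl_boundary O) -> forall y, pl_enorm (y - x) <= rho -> O y.
Proof.
move=> oO Ox rho_lt y yx; apply: contrapT => nOy.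
have [s /andP[s0 s1] bs] := segment_meets_boundary oO Ox nOy.
have := dist_to_le x bs.
rewrite opprD addrA subrr sub0r enormN enormZ ger0_norm //.
have : s * pl_enorm (y - x) <= rho.
  by apply: le_trans yx; rewrite -[leRHS]mul1r ler_wpM2r ?enorm_ge0.
lra.
Qed.

Lemma near_enorm_lt (a : 'rV[R]_N) (e : R) : 0 < e -> \forall b \near a, pl_enorm (b - a) < e.
Proof.
move=> e0; have N1 : 0 < N%:R + 1 :> R by rewrite ltr_wpDl.
apply/nbhs_normP; exists (e / (N%:R + 1)); first exact: divr_gt0.
move=> b /=; rewrite distrC ltr_pdivlMr // => ab.
apply: le_lt_trans (ler_enorm_mxnorm _) (le_lt_trans _ ab).
by rewrite mulrC ler_wpM2l ?normr_ge0 // lerDl.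
Qed.

Lemma continuous_atP (V : normedModType R) (f : V -> R) a :
  {for a, continuous f} <-> forall e, 0 < e -> \forall b \near a, `|f a - f b| < e.
Proof. exact: cvgrPdist_lt. Qed.

Lemma continuous_normr_powR (q : R) : 2 <= q -> continuous (fun t : R => `|t| `^ q).
Proof.
move=> q2 a; have [->|a0] := eqVneq a 0; last first.
  apply: (@continuous_comp _ _ _ (fun t : R => `|t|) (fun t => t `^ q)).
    exact: norm_continuous.
  have := @derivable_powR R 1 q `|a|; rewrite in_itv /= andbT normr_gt0 => /(_ a0) da.
  by apply: differentiable_continuous; apply/derivable1_diffP.
apply/continuous_atP => e e0; apply/nbhs_normP.
exists (Num.min 1 e) => /=; first by rewrite lt_min ltr01 e0.
move=> b; rewrite /= sub0r normrN lt_min => /andP[b1 be].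
rewrite normr0 powR0 ?gt_eqF //; last lra.
rewrite sub0r normrN ger0_norm ?powR_ge0 //.
apply: le_lt_trans (powR_le_sqr q2 (normr_ge0 b) (ltW b1)) _.
by rewrite expr2; apply: le_lt_trans (ler_piMr (normr_ge0 _) (ltW b1)) _.
Qed.

Lemma continuous_enorm_sub (a : 'rV[R]_N) : continuous (fun y : 'rV[R]_N => pl_enorm (y - a)).
Proof.
move=> y; apply/continuous_atP => e e0; apply: filterS (near_enorm_lt y e0) => b.
apply: le_lt_trans; rewrite (enorm_distC b y).
by have := ler_enorm_dist (y - a) (b - a); rewrite opprB addrA subrK.
Qed.

Lemma compact_eball (a : 'rV[R]_N) (rho : R) : compact [set y | pl_enorm (y - a) <= rho].
Proof.
apply: bounded_closed_compact.
  exists (rho + pl_enorm a); split; first exact: num_real.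
  move=> M aM y /= ya; apply: le_trans (ler_mxnorm_enorm y) _.
  have := ler_enormD (y - a) a; rewrite subrK; lra.
exact: (proj1 (continuous_closedP _) (continuous_enorm_sub (a:=a)) _ (@closed_le R rho)).
Qed.

End Topology.

Definition penalty (R : realType) (N : nat) (q eps : R) (v : 'rV[R]_N) : R :=
  pl_enorm v `^ q / (q * eps `^ (q - 1)).

Section Penalty.
Variables (R : realType) (N : nat) (q eps : R).
Hypotheses (q2 : 2 <= q) (eps0 : 0 < eps).

Let q_gt0 : 0 < q. Proof. exact: lt_le_trans q2. Qed.

Lemma penalty_scale_gt0 : 0 < q * eps `^ (q - 1).
Proof. by rewrite mulr_gt0 ?powR_gt0. Qed.

Lemma penalty_ge0 (v : 'rV[R]_N) : 0 <= penalty q eps v.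
Proof. by rewrite divr_ge0 ?powR_ge0 // ltW // penalty_scale_gt0. Qed.

Lemma penalty0 : penalty q eps (0 : 'rV[R]_N) = 0.
Proof. by rewrite /penalty enorm0 powR0 ?mul0r ?gt_eqF. Qed.

Lemma penalty_le_sqr (v : 'rV[R]_N) : pl_enorm v <= 1 ->
  penalty q eps v <= pl_enorm v ^+ 2 / (q * eps `^ (q - 1)).
Proof.
move=> v1; rewrite ler_pM2r ?invr_gt0 ?penalty_scale_gt0 //.
exact: powR_le_sqr (enorm_ge0 _) v1.
Qed.

Lemma penalty_addr_le (z j : 'rV[R]_N) : z != 0 -> pl_enorm j <= pl_enorm z / (3 * q) ->
  penalty q eps (z + j) <= penalty q eps z
    + q * pl_enorm z `^ (q - 2) / (q * eps `^ (q - 1)) * pl_dotv z j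
    + taylor_const q * pl_enorm z `^ (q - 2) / (q * eps `^ (q - 1)) * pl_enorm j ^+ 2.
Proof.
move=> z0 jz; set K := q * eps `^ (q - 1); set P := pl_enorm z `^ (q - 2).
have K0 : 0 < K := penalty_scale_gt0.
have -> : penalty q eps z + q * P / K * pl_dotv z j + taylor_const q * P / K * pl_enorm j ^+ 2
    = (pl_enorm z `^ q + q * P * pl_dotv z j + taylor_const q * P * pl_enorm j ^+ 2) / K.
  by rewrite /penalty -/K; field; rewrite gt_eqF.
by rewrite ler_pM2r ?invr_gt0 // powR_enormD_le.
Qed.

Lemma continuous_penalty (x : 'rV[R]_N) :
  continuous (fun y : 'rV[R]_N => penalty q eps (x - y)).
Proof.
have -> : (fun y : 'rV[R]_N => penalty q eps (x - y)) =
    (fun t => `|t| `^ q / (q * eps `^ (q - 1))) \o (fun y => pl_enorm (y - x)).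
  by apply/funext => y; rewrite /comp /penalty (ger0_norm (enorm_ge0 _)) enorm_distC.
move=> y; apply: continuous_comp; first exact: continuous_enorm_sub.
by apply: cvgMr_tmp; exact: continuous_normr_powR.
Qed.

End Penalty.

Section InfConvolution.
Variables (R : realType) (N : nat) (Omega : set 'rV[R]_N) (u : 'rV[R]_N -> R) (q eps : R).
Hypotheses (oO : pl_eopen Omega) (q2 : 2 <= q) (eps0 : 0 < eps).
Hypothesis u_cont : forall y, Omega y -> {for y, continuous u}.
Hypothesis osc_bounded : exists W, forall y z, Omega y -> Omega z -> u y - u z <= W.

Let Ke := q * eps `^ (q - 1).

Lemma infconv_le v y : Omega y -> pl_infconv Omega u q eps v <= u y + penalty q eps (v - y).
Proof.
move=> Oy; apply: ge_inf; last by exists y.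
have [W uW] := osc_bounded; exists (u y - W) => _ [z Oz <-].
by have := uW _ _ Oy Oz; have := penalty_ge0 q2 eps0 (v - z); rewrite /penalty; lra.
Qed.

Lemma osc_le y z : Omega y -> Omega z -> u y - u z <= pl_osc Omega u.
Proof.
move=> Oy Oz; apply: sup_upper_bound; last by exists y => //; exists z.
split; first by exists (u y - u z), y => //; exists z.
by have [W uW] := osc_bounded; exists W => _ [y' Oy' [z' Oz' <-]]; exact: uW.
Qed.

Lemma rad_powR x : Omega x -> pl_rad Omega u q eps `^ q = Ke * pl_osc Omega u.
Proof.
move=> Ox; have osc0 : 0 <= pl_osc Omega u by have := osc_le Ox Ox; rewrite subrr.
have q0 : q != 0 by rewrite gt_eqF // (lt_le_trans _ q2).
by rewrite /pl_rad -powRrM mulVf // powRr1 // mulr_ge0 // ltW // penalty_scale_gt0.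
Qed.

(* Beyond distance [r(eps)] the penalty exceeds the oscillation of [u]. *)
Lemma infconv_far x y : pl_inner_set Omega (pl_rad Omega u q eps) x -> Omega y ->
  pl_dist_to x (pl_boundary Omega) + pl_rad Omega u q eps < 2 * pl_enorm (y - x) ->
  u x < u y + penalty q eps (x - y).
Proof.
move=> [Ox rad_lt] Oy far; set rad := pl_rad Omega u q eps in rad_lt far.
have rad_xy : rad < pl_enorm (x - y) by rewrite enorm_distC; lra.
have : rad `^ q < pl_enorm (x - y) `^ q.
  by apply: gt0_ltr_powR; rewrite ?nnegrE ?powR_ge0 ?enorm_ge0 ?(lt_le_trans _ q2).
rewrite (rad_powR Ox) => radq.
have : pl_osc Omega u < penalty q eps (x - y).
  by rewrite /penalty ltr_pdivlMr ?penalty_scale_gt0 // mulrC.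
have := osc_le Ox Oy; lra.
Qed.

Lemma infconv_attained x : pl_inner_set Omega (pl_rad Omega u q eps) x ->
  exists2 y, Omega y & pl_infconv Omega u q eps x = u y + penalty q eps (x - y).
Proof.
move=> xin; have [Ox rad_lt] := xin.
set dist := pl_dist_to x _ in rad_lt; set rad := pl_rad _ _ _ _ in rad_lt.
have rad0 : 0 <= rad by exact: powR_ge0.
set rho := (dist + rad) / 2.
set K := [set y | pl_enorm (y - x) <= rho].
have KO : K `<=` Omega by apply: eball_sub => //; rewrite /rho; lra.
have Kx : K x by rewrite /K /= subrr enorm0 divr_ge0 //; lra.
set g := fun y => u y + penalty q eps (x - y).
have gK : {within K, continuous g}.
  apply: continuous_in_subspaceT => y; rewrite inE => /KO Oy.
  apply: (@cvgD _ _ _ (nbhs y) (nbhs_filter y)); first exact: u_cont Oy.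
  exact: continuous_penalty.
have [y] := EVT_min_rV (ex_intro _ x Kx) (@compact_eball _ _ x rho) gK.
rewrite inE => Ky ymin; exists y; first exact: KO.
have gx : g x = u x by rewrite /g subrr penalty0 ?addr0.
have glob z : Omega z -> g y <= g z.
  move=> Oz; have [zx|zx] := leP (pl_enorm (z - x)) rho; first by apply: ymin; rewrite inE.
  apply: le_trans (ymin x _) _; first by rewrite inE.
  rewrite gx; apply/ltW/infconv_far => //; rewrite -/dist -/rad.
  by move: zx; rewrite /rho; lra.
apply/eqP; rewrite eq_le infconv_le /=; last exact: KO.
apply: lb_le_inf; first by exists (g y), y => //; exact: KO.
by move=> _ [z Oz <-]; exact: glob.
Qed.

Lemma minimiser_penalty_le x y : Omega x ->
  pl_infconv Omega u q eps x = u y + penalty q eps (x - y) ->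
  penalty q eps (x - y) <= u x - u y.
Proof.
move=> Ox y_min; have := infconv_le x Ox.
by rewrite y_min subrr penalty0 // addr0 -lerBrDl.
Qed.

End InfConvolution.

Section Minimiser.
Variables (R : realType) (N : nat) (Omega : set 'rV[R]_N) (u : 'rV[R]_N -> R) (q eps : R).
Variables (x y eta : 'rV[R]_N) (X : 'M[R]_N).
Hypotheses (oO : pl_eopen Omega) (q2 : 2 <= q) (eps0 : 0 < eps).
Hypothesis osc_bounded : exists W, forall y z, Omega y -> Omega z -> u y - u z <= W.
Hypotheses (Ox : Omega x) (Oy : Omega y).
Hypothesis y_min : pl_infconv Omega u q eps x = u y + penalty q eps (x - y).
Hypotheses (jet : pl_subjet Omega (pl_infconv Omega u q eps) x eta X) (eta_neq0 : eta != 0).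

Let Ke := q * eps `^ (q - 1).
Let Ke_gt0 : 0 < Ke. Proof. exact: penalty_scale_gt0. Qed.
Let q_gt0 : 0 < q. Proof. exact: lt_le_trans q2. Qed.

(* [z] is a competitor in the infimum defining [u_eps (x + h)]. *)
Lemma minimiser_touching d : 0 < d -> exists2 rho, 0 < rho & forall h z,
  pl_enorm h < rho -> Omega z ->
  u y + penalty q eps (x - y) + pl_dotv eta h + 2^-1 * pl_quadf X h - d * pl_enorm h ^+ 2
    <= u z + penalty q eps (x + h - z).
Proof.
move=> d0; have [_ /(_ d d0) [rho0 [rho00 sub]]] := jet.
have [rx [rx0 ball_x]] := oO Ox.
exists (Num.min rho0 rx) => [|h z]; first by rewrite lt_min rho00 rx0.
rewrite lt_min => /andP[h0 hx] Oz.
have xhx : x + h - x = h by rewrite addrC addKr.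
have Oxh : Omega (x + h) by apply: ball_x; rewrite xhx.
have := sub (x + h) Oxh; rewrite xhx y_min => /(_ h0) /le_trans; apply.
exact: infconv_le.
Qed.

Lemma minimiser_neq : x - y != 0.
Proof.
apply/negP => /eqP xy.
have [rho rho0 touch] := minimiser_touching ltr01.
have eta0 : eta = 0.
  apply: (@dotvv_eq0_small _ _ eta (2^-1 * mx_abs_sum X + 1 + Ke^-1)
            (Num.min rho 1 / (pl_enorm eta + 1))).
    by rewrite divr_gt0 ?lt_min ?rho0 ?ltr01 // ltr_wpDl ?enorm_ge0.
  move=> t t0 /(enormZ_lt t0); rewrite lt_min => /andP[h_rho h1].
  have := touch (t *: eta) y h_rho Oy.
  rewrite xy penalty0 // addr0 (_ : x + t *: eta - y = t *: eta); last first.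
    by rewrite addrAC xy add0r.
  have := penalty_le_sqr q2 eps0 (ltW h1); rewrite -/Ke enorm_sqrZ dotvZr mul1r.
  have := quadfZ_ge X t eta.
  set n2 := pl_dotv eta eta; set A := t ^+ 2 * n2.
  have -> : (2^-1 * mx_abs_sum X + 1 + Ke^-1) * t ^+ 2 * n2 =
      2^-1 * (mx_abs_sum X * A) + A + A / Ke by rewrite /A; field; rewrite gt_eqF.
  move: (mx_abs_sum X * A) (A / Ke) => B C; lra.
by move: eta_neq0; rewrite eta0 eqxx.
Qed.

Lemma minimiser_gradient :
  eta = (q * pl_enorm (x - y) `^ (q - 2) / Ke) *: (x - y).
Proof.
set z := x - y; set P := pl_enorm z `^ (q - 2); set g := (q * P / Ke) *: z.
have z0 : z != 0 := minimiser_neq.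
have r0 := enorm_gt0 z0.
have [rho rho0 touch] := minimiser_touching ltr01.
apply/eqP; rewrite -subr_eq0; apply/eqP; set v := eta - g.
apply: (@dotvv_eq0_small _ _ v (2^-1 * mx_abs_sum X + 1 + taylor_const q * P / Ke)
          (Num.min rho (pl_enorm z / (3 * q)) / (pl_enorm v + 1))).
  by rewrite divr_gt0 ?lt_min ?rho0 ?divr_gt0 ?mulr_gt0 // ltr_wpDl ?enorm_ge0.
move=> t t0 /(enormZ_lt t0); rewrite lt_min => /andP[h_rho hz].
have := touch (t *: v) y h_rho Oy.
rewrite (_ : x + t *: v - y = z + t *: v); last by rewrite addrAC.
have := penalty_addr_le q2 eps0 z0 (ltW hz); rewrite -/Ke -/P.
have -> : pl_dotv eta (t *: v) = t * pl_dotv v v + q * P / Ke * pl_dotv z (t *: v).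
  by rewrite -{1}(subrK g eta) -/v dotvDl dotvZr /g dotvZl.
have := quadfZ_ge X t v; rewrite enorm_sqrZ.
set A := t ^+ 2 * pl_dotv v v; set c := taylor_const q * P / Ke.
have -> : (2^-1 * mx_abs_sum X + 1 + c) * t ^+ 2 * pl_dotv v v =
    2^-1 * (mx_abs_sum X * A) + A + c * A by rewrite /A; ring.
move: (mx_abs_sum X * A) (c * A) (q * P / Ke * pl_dotv z (t *: v)) => B C D; lra.
Qed.

Definition minimiser_curvature := taylor_const q * pl_enorm (x - y) `^ (q - 2) / Ke.

Lemma minimiser_curvature_ge0 : 0 <= minimiser_curvature.
Proof.
apply: divr_ge0; last exact: ltW Ke_gt0.
by apply: mulr_ge0; [exact: taylor_const_ge0 (ltW q_gt0) | exact: powR_ge0].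
Qed.

(* [y + k] is tested against [u_eps] at [x + k + t eta]; the extra shift along [eta]
   is paid for by the rank-two correction. *)
Lemma minimiser_subjet b :
  pl_subjet Omega u y eta (direction_update X eta b minimiser_curvature).
Proof.
have [sX _] := jet; split=> [|d d0]; first exact: rank2_update_sym.
set z := x - y; set c := minimiser_curvature; set r := pl_enorm z.
have z0 : z != 0 := minimiser_neq.
have r0 : 0 < r := enorm_gt0 z0.
set B1 := 1 + `|b|; have B10 : 0 < B1 by rewrite ltr_wpDr.
have [rho rho0 touch] := minimiser_touching (divr_gt0 d0 (exprn_gt0 2 B10)).
exists (Num.min rho (r / (3 * q)) / B1); split.
  by rewrite divr_gt0 // lt_min rho0 divr_gt0 ?mulr_gt0.
move=> y' Oy'; set k := y' - y; rewrite ltr_pdivlMr // mulrC lt_min => /andP[k_rho k_z].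
set t := b * pl_dotv eta k / pl_dotv eta eta; set j := t *: eta.
have jk : pl_enorm j <= `|b| * pl_enorm k := enorm_projZ_le b eta k.
have hk : pl_enorm (k + j) <= B1 * pl_enorm k.
  by apply: le_trans (ler_enormD _ _) _; rewrite /B1 mulrDl mul1r lerD2l.
have jz : pl_enorm j <= r / (3 * q).
  apply: ltW; apply: (le_lt_trans _ k_z); apply: le_trans jk _.
  by rewrite ler_wpM2r ?enorm_ge0 // /B1 lerDr.
have pen_zj : penalty q eps (z + j) <= penalty q eps z + pl_dotv eta j + c * pl_enorm j ^+ 2.
  by rewrite minimiser_gradient dotvZl; exact: penalty_addr_le.
have dk : d / B1 ^+ 2 * pl_enorm (k + j) ^+ 2 <= d * pl_enorm k ^+ 2.
  rewrite -mulrA ler_pM2l // ler_pdivrMl ?exprn_gt0 // -exprMn.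
  by rewrite ler_pXn2r ?nnegrE ?enorm_ge0 ?mulr_ge0 ?enorm_ge0 // ltW.
have := touch (k + j) y' (le_lt_trans hk k_rho) Oy'; rewrite -/z.
rewrite (_ : x + (k + j) - y' = z + j); last by apply/rowP => i; rewrite !mxE; ring.
rewrite dotvDr quadf_direction_update // -/t -/j -(mulrA 2 c).
move: pen_zj dk; move: (c * pl_enorm j ^+ 2) => C; lra.
Qed.

Variables (p : 'rV[R]_N -> R) (L pm : R).
Hypotheses (supersol : pl_visc_super Omega p u) (pm_gt1 : 1 < pm).
Hypotheses (pm_le_px : pm <= p x) (pm_le_py : pm <= p y).
Hypothesis p_lip : `|p x - p y| <= L * pl_enorm (x - y).

Definition Fop_error_const := 2 * taylor_const q * L ^+ 2 / (pm - 1).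

Lemma Fop_error_const_ge0 : 0 <= Fop_error_const.
Proof.
apply: divr_ge0; last by rewrite subr_ge0 ltW.
by rewrite mulr_ge0 ?sqr_ge0 // mulr_ge0 // taylor_const_ge0 // (ltW q_gt0).
Qed.

(* The supersolution test at [y], with the correction chosen so that
   [(p y - 1) (1 + b)^2 = p x - 1], transfers to [x] up to the Lipschitz error of [p]. *)
Lemma minimiser_Fop_ge :
  - (Fop_error_const * penalty q eps (x - y)) <= pl_Fop p x eta X.
Proof.
have py1 : 0 < p y - 1 by have := pm_gt1; have := pm_le_py; lra.
have px1 : 1 < p x by have := pm_gt1; have := pm_le_px; lra.
set a := (p x - 1) / (p y - 1); set b := Num.sqrt a - 1.
have a0 : 0 <= a by rewrite divr_ge0 // ltW // subr_gt0.
have hb : (p y - 1) * (1 + b) ^+ 2 - (p x - 1) = 0.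
  have -> : 1 + b = Num.sqrt a by rewrite /b addrC subrK.
  by rewrite sqr_sqrtr // /a mulrC divfK ?subrr ?gt_eqF.
have := (proj2 supersol) y eta _ Oy (minimiser_subjet b) eta_neq0.
rewrite (Fop_direction_update p x) // hb mulr0 subr0.
set z := x - y; set r := pl_enorm z.
have r0 : 0 < r := enorm_gt0 minimiser_neq.
have b2 : (p y - 1) * b ^+ 2 <= (L * r) ^+ 2 / (pm - 1).
  have pm_py : 1 < pm <= p y by rewrite pm_gt1 pm_le_py.
  apply: le_trans (sqrt_ratio_sub1_le pm_py px1) _.
  apply: ler_wpM2r; first by rewrite invr_ge0 subr_ge0 (ltW pm_gt1).
  have Lr0 : 0 <= L * r := le_trans (normr_ge0 _) p_lip.
  by rewrite -real_normK ?num_real // ler_pXn2r ?nnegrE ?normr_ge0.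
have : 2 * (p y - 1) * minimiser_curvature * b ^+ 2 <= Fop_error_const * penalty q eps z.
  have -> : 2 * (p y - 1) * minimiser_curvature * b ^+ 2 =
      2 * minimiser_curvature * ((p y - 1) * b ^+ 2) by ring.
  apply: le_trans (ler_wpM2l _ b2) _.
    by rewrite mulr_ge0 // minimiser_curvature_ge0.
  rewrite /penalty /minimiser_curvature /Fop_error_const -/z -/r -/Ke (powR_subn2 q r0).
  by rewrite le_eqVlt; apply/predU1l; field; rewrite !gt_eqF // subr_gt0.
lra.
Qed.

Lemma minimiser_weighted_Fop_ge (w : R -> R) :
  penalty q eps (x - y) <= w (pl_enorm (x - y)) ->
  - Fop_error_const * (w (pl_enorm (x - y)) + pl_enorm (x - y) / q) <=
  pl_enorm eta `^ (Num.min (p x - 2) 0) * pl_Fop p x eta X.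
Proof.
move=> pen_w; set r := pl_enorm (x - y); set G := pl_enorm eta `^ _.
have r0 : 0 < r := enorm_gt0 minimiser_neq.
have G_pen : G * penalty q eps (x - y) <= w r + r / q.
  apply: powR_npos_mul_le (enorm_gt0 eta_neq0) _ q_gt0 _ (ltW r0) _.
  - by rewrite ge_min lexx orbT le_min; have := pm_gt1; have := pm_le_px; lra.
  - by rewrite pen_w penalty_ge0.
  rewrite minimiser_gradient enormZ ger0_norm -/r; last first.
    by rewrite divr_ge0 ?mulr_ge0 ?powR_ge0 // ltW.
  rewrite /penalty (powR_subn2 q r0) -/r -/Ke; field; rewrite !gt_eqF //.
have G0 : 0 <= G by exact: powR_ge0.
have := ler_wpM2l G0 minimiser_Fop_ge; have := ler_wpM2l Fop_error_const_ge0 G_pen.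
rewrite mulrN mulrCA -mulrN mulNr; lra.
Qed.

End Minimiser.

Section Modulus.
Variables (R : realType) (w : R -> R).
Hypothesis w_mod : pl_modulus w.

Lemma modulus_small e : 0 < e -> exists2 d, 0 < d & forall t, 0 <= t < d -> w t < e.
Proof.
have [w_ge0 [w_mono w_cvg]] := w_mod.
move=> e0; have /cvgrPdist_lt /(_ e e0) /nbhs_normP[d d0 near_d] := w_cvg.
exists d => // t /andP[t0 td]; set s := (t + d) / 2.
have s0 : 0 < s by rewrite divr_gt0 // ltr_wpDl.
have sd : s < d by rewrite ltr_pdivrMr //; lra.
apply: le_lt_trans (w_mono t s t0 _) _; first by rewrite ler_pdivlMr //; lra.
have /= := near_d s; rewrite sub0r normrN gtr0_norm // => /(_ sd s0).
by rewrite sub0r normrN ger0_norm //; exact: w_ge0 (ltW s0).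
Qed.

Lemma modulus_cvg0 T (F : set_system T) {FF : Filter F} (f : T -> R) :
  f @ F --> 0 -> (\forall t \near F, 0 <= f t) -> w (f t) @[t --> F] --> 0.
Proof.
move=> f0 f_ge0; apply/cvgrPdist_lt => e e0; have [d d0 wd] := modulus_small e0.
move/cvgrPdist_lt : f0 => /(_ d d0); apply: filterS2 f_ge0 => t ft0.
rewrite !sub0r !normrN (ger0_norm ft0) ger0_norm ?(proj1 w_mod) // => ftd.
by apply: wd; rewrite ft0.
Qed.

Lemma modulus_continuous (N : nat) (O : set 'rV[R]_N) u : pl_eopen O ->
  pl_has_modulus O u w -> forall y, O y -> {for y, continuous u}.
Proof.
move=> oO uw y Oy; apply/continuous_atP => e e0; have [d d0 wd] := modulus_small e0.
have [r [r0 ball_y]] := oO y Oy.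
have dr : 0 < Num.min d r by rewrite lt_min d0 r0.
apply: filterS (@near_enorm_lt _ _ y _ dr) => b; rewrite lt_min => /andP[bd br].
apply: le_lt_trans (uw _ _ Oy (ball_y b br)) _.
by apply: wd; rewrite enorm_ge0 enorm_distC.
Qed.

Lemma modulus_osc_le (N : nat) (O : set 'rV[R]_N) u D :
  pl_has_modulus O u w -> (forall y z, O y -> O z -> pl_enorm (y - z) <= D) ->
  forall y z, O y -> O z -> u y - u z <= w D.
Proof.
move=> uw diam y z Oy Oz; apply: le_trans (ler_norm _) (le_trans (uw _ _ Oy Oz) _).
by apply: (proj1 (proj2 w_mod)); [exact: enorm_ge0 | exact: diam].
Qed.

End Modulus.

Lemma ebounded_diam (R : realType) (N : nat) (O : set 'rV[R]_N) : pl_ebounded O ->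
  exists2 D, 0 <= D & forall y z, O y -> O z -> pl_enorm (y - z) <= D.
Proof.
move=> [M bM]; exists (Num.max (M + M) 0) => [|y z Oy Oz]; first by rewrite le_max lexx orbT.
apply: le_trans (ler_enormD _ _) _; rewrite le_max enormN.
by rewrite lerD ?bM.
Qed.

Section ErrorFunction.
Variables (R : realType) (w : R -> R) (q W C : R).
Hypotheses (w_mod : pl_modulus w) (q_gt1 : 1 < q) (W_ge0 : 0 <= W) (C_ge0 : 0 <= C).

(* A bound for [|x - y|] at the minimiser, since [|x - y|^q / (q eps^(q-1)) <= W]. *)
Definition minimiser_radius (eps : R) := (q * eps `^ (q - 1) * W) `^ q^-1.

Definition error_fun (eps : R) := - C * (w (minimiser_radius eps) + minimiser_radius eps / q).

Let q_gt0 : 0 < q. Proof. exact: lt_trans q_gt1. Qed.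

Lemma minimiser_radius_cvg0 : minimiser_radius eps @[eps --> 0^'+] --> 0.
Proof.
have radE : \forall eps \near 0^'+,
    (q * W) `^ q^-1 * eps `^ ((q - 1) / q) = minimiser_radius eps.
  have qW : 0 <= q * W by rewrite mulr_ge0 // ltW.
  by near=> eps; rewrite /minimiser_radius mulrAC (powRM _ qW (powR_ge0 _ _)) -powRrM.
apply: cvg_trans (near_eq_cvg radE) _; set F := (0 : R)^'+.
rewrite -(mulr0 ((q * W) `^ q^-1)) {}/F.
by apply: cvgMl_tmp; apply: powR_cvg0; rewrite divr_gt0 // subr_gt0.
Unshelve. all: end_near. Qed.

Lemma error_fun_cvg0 : error_fun eps @[eps --> 0^'+] --> 0.
Proof.
rewrite /error_fun; set F := (0 : R)^'+.
rewrite -(mulr0 (- C)) -[X in _ * X](addr0 0) -{2}(mul0r q^-1) {}/F.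
apply: cvgMl_tmp; apply: cvgD; last exact: cvgMr_tmp minimiser_radius_cvg0.
apply: modulus_cvg0 minimiser_radius_cvg0 _ => //.
by near=> eps; exact: powR_ge0.
Unshelve. all: end_near. Qed.

Lemma error_fun_le eps r : 0 < eps -> 0 <= r -> r `^ q / (q * eps `^ (q - 1)) <= W ->
  error_fun eps <= - C * (w r + r / q).
Proof.
move=> eps0 r0 rW; have K0 : 0 < q * eps `^ (q - 1) by rewrite mulr_gt0 ?powR_gt0.
have r_le : r <= minimiser_radius eps.
  have -> : r = (r `^ q) `^ q^-1 by rewrite -powRrM mulfV ?gt_eqF // powRr1.
  have KW : 0 <= q * eps `^ (q - 1) * W by rewrite mulr_ge0 // ltW.
  rewrite /minimiser_radius ge0_ler_powR ?nnegrE ?invr_ge0 ?powR_ge0 ?(ltW q_gt0) //.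
  by move: rW; rewrite ler_pdivrMr // mulrC.
rewrite /error_fun !mulNr lerN2 ler_wpM2l // lerD //.
  by apply: (proj1 (proj2 w_mod)).
by rewrite ler_pM2r ?invr_gt0.
Qed.

End ErrorFunction.

Theorem lemma5p3 (R : realType) (N : nat) (Omega : set 'rV[R]_N)
  (p : 'rV[R]_N -> R) (q : R) (w : R -> R) :
  pl_eopen Omega -> pl_ebounded Omega ->
  (forall x, Omega x -> 1 < p x) ->
  pl_lipschitz_on Omega p ->
  (exists pminus : R, 1 < pminus /\ forall x, Omega x -> pminus <= p x) ->
  2 <= q ->
  pl_modulus w ->
  exists E : R -> R, (E e @[e --> 0^'+] --> 0) /\
    forall u : 'rV[R]_N -> R,
      pl_has_modulus Omega u w ->
      pl_visc_super Omega p u ->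
      forall (eps : R) (x eta : 'rV[R]_N) (X : 'M[R]_N),
        0 < eps ->
        pl_inner_set Omega (pl_rad Omega u q eps) x ->
        pl_subjet Omega (pl_infconv Omega u q eps) x eta X ->
        eta != 0 ->
        E eps <= (pl_enorm eta) `^ (Num.min (p x - 2) 0) * pl_Fop p x eta X.
Proof.
move=> oO /ebounded_diam[D D0 diam] _ [L p_lip] [pm [pm_gt1 pm_le]] q2 w_mod.
have q_gt1 : 1 < q by lra.
have wD0 : 0 <= w D := proj1 w_mod D D0.
exists (error_fun w q (w D) (Fop_error_const q L pm)).
split=> [|u u_w supersol eps x eta X eps0 xin jet eta0]; first exact: error_fun_cvg0.
have osc : exists W, forall y z, Omega y -> Omega z -> u y - u z <= W.
  by exists (w D); exact: modulus_osc_le.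
have [y Oy y_min] := infconv_attained oO q2 eps0 (modulus_continuous w_mod oO u_w) osc xin.
have Ox : Omega x by case: xin.
have pen_w : penalty q eps (x - y) <= w (pl_enorm (x - y)).
  apply: le_trans (minimiser_penalty_le q2 eps0 osc Ox y_min) _.
  exact: le_trans (ler_norm _) (u_w _ _ Ox Oy).
apply: le_trans (minimiser_weighted_Fop_ge oO q2 eps0 osc Ox Oy y_min jet eta0
  supersol pm_gt1 (pm_le _ Ox) (pm_le _ Oy) (p_lip _ _ Ox Oy) pen_w).
apply: error_fun_le => //; first exact: Fop_error_const_ge0.
  exact: enorm_ge0.
apply: le_trans pen_w _; apply: (proj1 (proj2 w_mod)); [exact: enorm_ge0 | exact: diam].
Qed.
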